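(* Let $n\ge 3$ and let ${\bf a},{\bf b},{\bf c}$ be sequences of positive integers each with sum at most $n$. If $\mathcal T_{{\bf a},{\bf b},{\bf c}}$ has finitely many $G$-orbits, then one of ${\bf a},{\bf b},{\bf c}$ equals $(1)$ or $(n)$.
   Context: $\mathbb F$ is an infinite field of characteristic $\ne 2$. Equip $\mathbb F^{2n}$ (canonical basis $e_1,\ldots,e_{2n}$) with the symmetric bilinear form $(e_i,e_j)=\delta_{i,2n+1-j}$, and let $G={\rm O}_{2n}(\mathbb F)$ be its isometry group. A subspace $V$ is isotropic if $(V,V)=\{0\}$. For a sequence ${\bf a}=(\alpha_1,\ldots,\alpha_p)$ of positive integers with $\sum\alpha_j\le n$, $M_{\bf a}$ is the set of flags $V_1\subset\cdots\subset V_p$ in $\mathbb F^{2n}$ with $\dim V_j=\alpha_1+\cdots+\alpha_j$ and $V_p$ isotropic. $\mathcal T_{{\bf a},{\bf b},{\bf c}}=M_{\bf a}\times M_{\bf b}\times M_{\bf c}$ with the diagonal $G$-action. *)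

From HB Require Import structures.
From mathcomp Require Import all_boot all_order all_algebra.
Unset Printing Implicit Defensive.
Import GRing.Theory.
Local Open Scope ring_scope.

(* Vectors of F^{2n} are row vectors 'rV[F]_(2n); a subspace is represented
   by the row space of a square matrix 'M[F]_(2n) (mxalgebra, scope %MS). *)

(* Gram matrix of the form (e_i, e_j) = delta_{i, 2n+1-j} (1-based),
   i.e. 0-based indices i + j = 2n - 1. *)
Definition formJ (F : fieldType) (n : nat) : 'M[F]_(2 * n) :=
  \matrix_(i, j) ((i + j == (2 * n).-1)%N)%:R.

(* (u, v) = u *m formJ *m v^T ; g acts on row vectors by v |-> v *m g.
   O_{2n}(F) = matrices preserving the form. *)
Definition orthogonal_group (F : fieldType) (n : nat) : pred 'M[F]_(2 * n) :=
  [pred g | g *m formJ F n *m g^T == formJ F n].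

Definition isotropic (F : fieldType) (n : nat) (A : 'M[F]_(2 * n)) : bool :=
  A *m formJ F n *m A^T == 0.

Definition is_flag (F : fieldType) (n : nat) (a : seq nat)
    (V : seq 'M[F]_(2 * n)) : Prop :=
  [/\ size V = size a,
      (forall j, (j < size a)%N -> \rank (nth 0 V j) = sumn (take j.+1 a)),
      (forall j, (j.+1 < size a)%N -> (nth 0 V j <= nth 0 V j.+1)%MS)
    & isotropic F n (nth 0 V (size a).-1)].

Definition flag_act_eq (F : fieldType) (n : nat) (V W : seq 'M[F]_(2 * n))
    (g : 'M[F]_(2 * n)) : Prop :=
  size V = size W /\ forall j, (j < size V)%N -> (nth 0 V j *m g == nth 0 W j)%MS.

(* T_{a,b,c} = M_a x M_b x M_c has finitely many G-orbits under the diagonal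
   action: finitely many triples represent every orbit. *)
Definition finitely_many_orbits (F : fieldType) (n : nat) (a b c : seq nat) : Prop :=
  exists reps : seq (seq 'M[F]_(2 * n) * seq 'M[F]_(2 * n) * seq 'M[F]_(2 * n)),
    forall X Y Z, is_flag F n a X -> is_flag F n b Y -> is_flag F n c Z ->
      exists2 r, r \in reps &
        exists2 g, g \in orthogonal_group F n &
          [/\ flag_act_eq F n r.1.1 X g, flag_act_eq F n r.1.2 Y g & flag_act_eq F n r.2 Z g].

Definition admissible_seq (n : nat) (a : seq nat) : bool :=
  [&& a != [::], all (fun x => (0 < x)%N) a & (sumn a <= n)%N].

From HB Require Import structures.
From mathcomp Require Import all_boot all_order all_algebra.
From mathcomp Require Import zify ring.
From Stdlib Require Import ClassicalEpsilon.

(* Write e_0, ..., e_{2n-1} for the standard basis, so that e_k pairs with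
   f_k := e_{2n-1-k}.  Every flag used below is spanned by initial segments of an
   isotropic frame that agrees with e_0, ..., e_{n-1} except at the positions 0, 1
   and n-1, which carry vectors of span(e_0, e_1, e_{n-1}, f_0, f_1, f_{n-1}); so
   the computations all take place in O_6.
   A type other than (1) and (n) has a partial sum strictly between 1 and n, or
   has the partial sums 1 and n.  If all of a, b, c are of the first kind (case
   A), or if one of them, say c, is of the second kind (case B), there are flags
   X of type a, Y of type b and a family Z_t of type c, indexed by t in F, such
   that no isometry fixing X and Y maps Z_t to Z_s for generic t <> s: pairing
   the images of well-chosen vectors forces t = s (or t s = 1 in case A).  As F
   is infinite, finitely many orbit representatives cannot account for all the
   triples (X, Y, Z_t). *)

Set Implicit Arguments.
Unset Strict Implicit.
Unset Printing Implicit Defensive.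
Import GRing.Theory.
Local Open Scope ring_scope.

Lemma pigeonhole_rel (T U : eqType) (P : T -> U -> Prop) (L : seq T) (R : seq U) :
  uniq L -> (size R < size L)%N -> (forall t, t \in L -> exists2 r, r \in R & P t r) ->
  exists t s r, [/\ t \in L, s \in L, t != s, P t r & P s r].
Proof.
case: L => [|t0 L] // uL RL LR.
have [r0 _ _] := LR t0 (mem_head _ _).
pose f t := epsilon (inhabits r0) (fun r => r \in R /\ P t r).
have fP t : t \in t0 :: L -> f t \in R /\ P t (f t).
  move=> tL; apply: (epsilon_spec (inhabits r0) (fun r => r \in R /\ P t r)).
  by case: (LR t tL) => r; exists r.
have : ~~ uniq (map f (t0 :: L)).
  apply: contraL RL => /uniq_leq_size fLR; rewrite -leqNgt -(size_map f).
  by apply: fLR => _ /mapP [t tL ->]; case: (fP t tL).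
case/(uniqPn r0) => i [j [ij jL]]; rewrite size_map in jL; have iL := ltn_trans ij jL.
rewrite !(nth_map t0) // => fij.
exists (nth t0 (t0 :: L) i), (nth t0 (t0 :: L) j), (f (nth t0 (t0 :: L) j)).
split; rewrite ?mem_nth ?nth_uniq //; first by rewrite neq_ltn ij.
- by rewrite -fij; case: (fP _ (mem_nth t0 iL)).
- by case: (fP _ (mem_nth t0 jL)).
Qed.

Lemma generic_params (F : fieldType) (F_infinite : forall s : seq F, exists x, x \notin s) k :
  exists L : seq F,
    [/\ uniq L, size L = k, 1 \notin L & {in L &, forall t s, t != s -> t * s != 1}].
Proof.
elim: k => [|k [L [uL sL L1 Linv]]]; first by exists [::].
have [x] := F_infinite (1 :: L ++ map GRing.inv L).
rewrite inE mem_cat negb_or => /andP [x1 /norP [xL xLinv]].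
have xt t : t \in L -> x * t != 1.
  move=> tL; apply: contra xLinv => /eqP xt1; apply/mapP; exists t => //.
  have t0 : t != 0 by apply: contra_eq_neq xt1 => ->; rewrite mulr0 eq_sym oner_neq0.
  by rewrite -[x](mulfK t0) xt1 mul1r.
exists (x :: L); split=> /=; rewrite ?xL ?sL // ?inE ?negb_or ?(eq_sym 1) ?x1 //.
move=> t s; rewrite !inE => /orP [/eqP ->|tL] /orP [/eqP ->|sL'] //; rewrite ?eqxx //.
- by move=> _; apply: xt.
- by move=> _; rewrite mulrC; apply: xt.
- exact: Linv.
Qed.

Lemma sub_image_eqmx (F : fieldType) m1 m2 k p (A : 'M[F]_(m1, k)) (B : 'M[F]_(m2, k))
    (h : 'M[F]_k) (v : 'M[F]_(p, k)) :
  (A *m h == B)%MS -> (v <= A)%MS -> (v *m h <= B)%MS.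
Proof. by case/andP=> AB _ vA; apply: submx_trans AB; apply: submxMr. Qed.

Lemma sub_preimage_eqmx (F : fieldType) m1 m2 k p (A : 'M[F]_(m1, k)) (B : 'M[F]_(m2, k))
    (h : 'M[F]_k) (v : 'M[F]_(p, k)) :
  (A *m h == B)%MS -> (v <= B)%MS -> exists2 u, (u <= A)%MS & u *m h = v.
Proof.
case/andP=> _ BA vB; case/submxP: (submx_trans vB BA) => D ->.
by exists (D *m A); [apply: submxMl | rewrite mulmxA].
Qed.

Definition partial_sums (a : seq nat) : seq nat :=
  [seq sumn (take j.+1 a) | j <- iota 0 (size a)].

Definition inner_partial_sum (n : nat) (a : seq nat) : bool :=
  has (fun d => 1 < d < n)%N (partial_sums a).

Definition extreme_partial_sums (n : nat) (a : seq nat) : bool :=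
  (1%N \in partial_sums a) && (n \in partial_sums a).

Lemma head_partial_sums x a : x \in partial_sums (x :: a).
Proof. by apply/mapP; exists 0%N; rewrite ?mem_iota //= take0 addn0. Qed.

Lemma sumn_partial_sums a : a != [::] -> sumn a \in partial_sums a.
Proof.
case: a => // x a _; apply/mapP; exists (size a); first by rewrite mem_iota /= add0n ltnSn.
by rewrite /= take_size.
Qed.

Lemma admissible_seq_cases n a : admissible_seq n a ->
  [\/ a = [:: 1%N], a = [:: n] | inner_partial_sum n a || extreme_partial_sums n a].
Proof.
case: a => // x a /and3P [_ /= /andP [x_gt0 a_pos] sum_le].
have a_nil : sumn a = 0%N -> a = [::].
  by case: a a_pos {sum_le} => //= y a /andP [y_gt0 _]; lia.
case: (boolP (inner_partial_sum n (x :: a))) => [|no_inner]; first by constructor 3.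
have out_mid d : d \in partial_sums (x :: a) -> ~~ (1 < d < n)%N.
  by move=> d_ps; apply: contra no_inner => d_mid; apply/hasP; exists d.
have x_out := out_mid _ (head_partial_sums x a).
have s_out := out_mid _ (sumn_partial_sums (isT : x :: a != [::])); rewrite /= in s_out.
have [x_n|x_n] := eqVneq x n; first by constructor 2; rewrite x_n a_nil //; lia.
have x1 : x = 1%N by lia.
have [s1|s1] := eqVneq (x + sumn a)%N 1%N; first by constructor 1; rewrite x1 a_nil //; lia.
constructor 3; apply/orP; right; apply/andP; split; first by rewrite -x1 head_partial_sums.
by rewrite (_ : n = sumn (x :: a)) ?sumn_partial_sums //=; lia.
Qed.

Lemma partial_sums_spread n a : (2 < n)%N ->
  inner_partial_sum n a || extreme_partial_sums n a ->
  has (fun d => 0 < d < n)%N (partial_sums a) && has (fun d => 1 < d <= n)%N (partial_sums a).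
Proof.
move=> n_gt2 /orP [/hasP [d da d_mid] | /andP [a1 a_n]]; apply/andP; split; apply/hasP.
- by exists d => //; lia.
- by exists d => //; lia.
- by exists 1%N => //; lia.
- by exists n => //; lia.
Qed.

Section Form.
Variables (F : fieldType) (n : nat).
Local Notation V := 'rV[F]_(2 * n).
Local Notation J := (formJ F n).

Definition bform (x y : V) : F := (x *m J *m y^T) 0 0.

Lemma trmx_formJ : J^T = J.
Proof. by apply/matrixP => i j; rewrite !mxE addnC. Qed.

Lemma bform_sym x y : bform x y = bform y x.
Proof.
rewrite /bform; transitivity ((x *m J *m y^T)^T 0 0); first by rewrite [RHS]mxE.
by rewrite !trmx_mul trmxK trmx_formJ mulmxA.
Qed.

Lemma bformDl x y z : bform (x + y) z = bform x z + bform y z.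
Proof. by rewrite /bform !mulmxDl mxE. Qed.

Lemma bformZl a x z : bform (a *: x) z = a * bform x z.
Proof. by rewrite /bform -!scalemxAl mxE. Qed.

Lemma bformNl x z : bform (- x) z = - bform x z.
Proof. by rewrite -scaleN1r bformZl mulN1r. Qed.

Lemma bformBl x y z : bform (x - y) z = bform x z - bform y z.
Proof. by rewrite bformDl bformNl. Qed.

Lemma bform0l z : bform 0 z = 0.
Proof. by rewrite /bform !mul0mx mxE. Qed.

Lemma bformDr x y z : bform z (x + y) = bform z x + bform z y.
Proof. by rewrite !(bform_sym z) bformDl. Qed.

Lemma bformZr a x z : bform z (a *: x) = a * bform z x.
Proof. by rewrite !(bform_sym z) bformZl. Qed.

Lemma bformNr x z : bform z (- x) = - bform z x.
Proof. by rewrite !(bform_sym z) bformNl. Qed.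

Lemma bformBr x y z : bform z (x - y) = bform z x - bform z y.
Proof. by rewrite !(bform_sym z) bformBl. Qed.

Lemma bform0r z : bform z 0 = 0.
Proof. by rewrite bform_sym bform0l. Qed.

Lemma bform_sumr (I : Type) (r : seq I) (P : pred I) (c : I -> F) (x : I -> V) w :
  bform w (\sum_(i <- r | P i) c i *: x i) = \sum_(i <- r | P i) c i * bform w (x i).
Proof.
rewrite (big_morph (bform w) (fun u v => bformDr u v w) (bform0r w)).
by apply: eq_bigr => i _; rewrite bformZr.
Qed.

Lemma bform_mx m1 m2 (A : 'M[F]_(m1, 2 * n)) (B : 'M[F]_(m2, 2 * n)) i j :
  (A *m J *m B^T) i j = bform (row i A) (row j B).
Proof.
rewrite /bform !mxE; apply: eq_bigr => k _; rewrite !mxE; congr (_ * _).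
by apply: eq_bigr => l _; rewrite !mxE.
Qed.

Definition ev (k : nat) : V := \row_(j < 2 * n) (j == k :> nat)%:R.

Lemma bform_ev i j : bform (ev i) (ev j) = ((i < 2 * n) && (i + j == (2 * n).-1))%N%:R.
Proof.
have evE k (k_lt : (k < 2 * n)%N) : ev k = delta_mx 0 (Ordinal k_lt).
  by apply/rowP => l; rewrite !mxE.
have ev_out k : (2 * n <= k)%N -> ev k = 0.
  move=> k_ge; apply/rowP => l; rewrite !mxE; case: eqP => // lk.
  by move: (ltn_ord l); rewrite lk ltnNge k_ge.
case: (ltnP i (2 * n)) => i_lt; last by rewrite (ev_out i) // bform0l.
case: (ltnP j (2 * n)) => j_lt; last first.
  rewrite (ev_out j) // bform0r (_ : (i + j == _)%N = false) //; apply/negbTE/eqP; lia.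
by rewrite (evE i i_lt) (evE j j_lt) /bform trmx_delta -rowE -colE !mxE.
Qed.

Lemma formJ_invol : J *m J = 1%:M.
Proof.
apply/matrixP => i j; rewrite !mxE (bigD1 (rev_ord i)) //= big1 => [|k ki].
  have i_lt := ltn_ord i; have j_lt := ltn_ord j.
  rewrite !mxE /= addr0 (_ : (i + (2 * n - i.+1) == (2 * n).-1)%N); last by apply/eqP; lia.
  by rewrite mul1r -val_eqE /=; congr (_ %:R); lia.
rewrite !mxE (_ : (i + k == (2 * n).-1)%N = false) ?mul0r //.
apply/negbTE/eqP => ik; move/eqP: ki; apply; apply: val_inj => /=; have := ltn_ord i; lia.
Qed.

Lemma bform_orthogonal g x y :
  g \in orthogonal_group F n -> bform (x *m g) (y *m g) = bform x y.
Proof.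
by rewrite inE => /eqP gJ; rewrite /bform trmx_mul !mulmxA -(mulmxA x g) -(mulmxA x (g *m J)) gJ.
Qed.

Lemma orthogonal_unitmx g : g \in orthogonal_group F n -> g \in unitmx.
Proof.
rewrite inE => /eqP gJ; case: (@mulmx1_unit _ _ g (J *m g^T *m J)) => //.
by rewrite !mulmxA gJ formJ_invol.
Qed.

Lemma orthogonal_divl g h : g \in orthogonal_group F n -> h \in orthogonal_group F n ->
  invmx g *m h \in orthogonal_group F n.
Proof.
move=> gO hO; have gU := orthogonal_unitmx gO.
move: gO hO; rewrite !inE => /eqP gJ /eqP hJ.
have -> : invmx g *m h *m J *m (invmx g *m h)^T = invmx g *m (h *m J *m h^T) *m (invmx g)^T.
  by rewrite trmx_mul !mulmxA.
by rewrite hJ -{1}gJ !mulmxA (mulVmx gU) mul1mx -mulmxA -trmx_mul (mulVmx gU) trmx1 mulmx1.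
Qed.

Lemma bform_image_perp h (A B : 'M[F]_(2 * n)) z w : h \in orthogonal_group F n ->
  (A *m h == B)%MS -> (forall u, (u <= A)%MS -> bform z u = 0) -> (w <= B)%MS ->
  bform (z *m h) w = 0.
Proof.
move=> hO AB zA wB; have [u uA <-] := sub_preimage_eqmx AB wB.
by rewrite bform_orthogonal // zA.
Qed.

Definition frame_mx (x : nat -> V) (d : nat) : 'M[F]_(2 * n) :=
  \matrix_(i, j) (if (i < d)%N then x i 0 j else 0).

Lemma row_frame_mx x d i : row i (frame_mx x d) = if (i < d)%N then x i else 0.
Proof. by apply/rowP => j; rewrite !mxE; case: ifP; rewrite ?mxE. Qed.

Lemma frame_mx_mem x d i : (i < d)%N -> (i < 2 * n)%N -> (x i <= frame_mx x d)%MS.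
Proof.
by move=> id i_lt; have := row_sub (Ordinal i_lt) (frame_mx x d); rewrite row_frame_mx id.
Qed.

Lemma frame_mx_mono x d d' : (d <= d')%N -> (frame_mx x d <= frame_mx x d')%MS.
Proof.
move=> dd'; apply/row_subP => i; rewrite row_frame_mx.
by case: ifP => id; [apply: frame_mx_mem; [lia | exact: ltn_ord] | apply: sub0mx].
Qed.

Lemma frame_mxP x d v : (v <= frame_mx x d)%MS ->
  exists r : 'I_(2 * n) -> F, v = \sum_(i < 2 * n | (i < d)%N) r i *: x i.
Proof.
case/submxP=> D ->; exists (D 0); rewrite mulmx_sum_row [RHS]big_mkcond.
by apply: eq_bigr => i _; rewrite row_frame_mx; case: ifP; rewrite ?scaler0.
Qed.

Lemma frame_mx1P x v : (v <= frame_mx x 1)%MS -> exists c, v = c *: x 0%N.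
Proof.
case/frame_mxP => r ->; have [n0|n_gt0] := posnP (2 * n).
  by exists 0; rewrite scale0r big1 // => i; have := ltn_ord i; lia.
exists (r (Ordinal n_gt0)); rewrite (big_pred1 (Ordinal n_gt0)) // => i.
by rewrite /= -val_eqE /= ltnS leqn0.
Qed.

Lemma frame_mx_perp x d w v : (forall i, (i < d)%N -> bform w (x i) = 0) ->
  (v <= frame_mx x d)%MS -> bform w v = 0.
Proof. by move=> wx /frame_mxP [r ->]; rewrite bform_sumr big1 // => i id; rewrite wx ?mulr0. Qed.

Lemma rank_frame_mx x y d : (d <= 2 * n)%N ->
  (forall i j, (i < d)%N -> (j < d)%N -> bform (x i) (y j) = (i == j)%:R) ->
  \rank (frame_mx x d) = d.
Proof.
move=> d_le xy; apply/eqP; rewrite eqn_leq; apply/andP; split.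
  have -> : frame_mx x d = pid_mx d *m frame_mx x d.
    apply/matrixP => i j; rewrite [RHS]mxE (bigD1 i) //= big1 => [|k ki]; last first.
      by rewrite mxE val_eqE eq_sym (negbTE ki) mul0r.
    by rewrite !mxE eqxx addr0; case: ifP; rewrite ?mul1r ?mul0r.
  by apply: leq_trans (mxrankM_maxl _ _) _; rewrite rank_pid_mx.
have gram : frame_mx x d *m J *m (frame_mx y d)^T = pid_mx d.
  apply/matrixP => i j; rewrite bform_mx !row_frame_mx !mxE.
  case: (ltnP i d) => id; case: (ltnP j d) => jd /=; rewrite ?bform0l ?bform0r ?andbF //.
    by rewrite xy // andbT.
  by rewrite andbT; case: eqP => // ij; move: id jd; rewrite ij; lia.
by rewrite -{1}(@rank_pid_mx F (2 * n) (2 * n) d d_le d_le) -gram -mulmxA mxrankM_maxl.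
Qed.

Definition flag_of (a : seq nat) (x : nat -> V) : seq 'M[F]_(2 * n) :=
  map (frame_mx x) (partial_sums a).

Lemma flag_of_is_flag a x y : (sumn a <= n)%N ->
  (forall i j, (i < n)%N -> (j < n)%N -> bform (x i) (x j) = 0) ->
  (forall i j, (i < n)%N -> (j < n)%N -> bform (x i) (y j) = (i == j)%:R) ->
  is_flag F n a (flag_of a x).
Proof.
move=> a_le xx xy.
have take_le j : (sumn (take j a) <= sumn a)%N by rewrite -{2}(cat_take_drop j a) sumn_cat leq_addr.
have nth_flag j : (j < size a)%N -> nth 0 (flag_of a x) j = frame_mx x (sumn (take j.+1 a)).
  by move=> ja; rewrite (nth_map 0%N) ?(nth_map 0%N) ?size_map ?size_iota // nth_iota.
split.
- by rewrite size_map size_map size_iota.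
- move=> j ja; rewrite nth_flag //; apply: (rank_frame_mx (y := y)).
    by have := take_le j.+1; lia.
  by move=> i k ij kj; apply: xy; have := take_le j.+1; lia.
- move=> j ja; rewrite !nth_flag ?(ltnW ja) //; apply: frame_mx_mono.
  by rewrite -(subnKC (leqnSn j.+1)) takeD sumn_cat leq_addr.
- case: a a_le take_le nth_flag => [|a0 a] /= a_le _ nth_flag; rewrite /isotropic.
    by rewrite !mul0mx.
  rewrite nth_flag //= take_size.
  apply/eqP/matrixP => i j; rewrite bform_mx !row_frame_mx mxE.
  case: ifP => id; last by rewrite bform0l.
  by case: ifP => jd; [apply: xx; lia | rewrite bform0r].
Qed.

Lemma flag_act_eq_comp R A B g h : g \in unitmx ->
  flag_act_eq F n R A g -> flag_act_eq F n R B h -> flag_act_eq F n A B (invmx g *m h).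
Proof.
move=> gU [RA RAg] [RB RBh]; split=> [|j]; first by rewrite -RA.
rewrite -RA => jR; have /eqmxP RAj := RAg j jR; have /eqmxP RBj := RBh j jR.
apply/eqmxP; rewrite mulmxA; apply: eqmx_trans RBj; apply: eqmxMr.
by apply: eqmx_trans (eqmx_sym (eqmxMr _ RAj)) _; rewrite mulmxK.
Qed.

Lemma flag_of_act a x y g : flag_act_eq F n (flag_of a x) (flag_of a y) g ->
  {in partial_sums a, forall d, (frame_mx x d *m g == frame_mx y d)%MS}.
Proof.
case=> _ act d da; have := act (index d (partial_sums a)).
rewrite size_map index_mem (nth_map 0%N 0 (frame_mx x)) ?index_mem //.
by rewrite (nth_map 0%N 0 (frame_mx y)) ?index_mem // nth_index //; apply.
Qed.

Section Special.
Hypothesis n_gt2 : (2 < n)%N.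

(* The indices 1 < k < n - 1 label the hyperbolic planes <e_k, f_k> that all the
   flags below share with the standard flag. *)
Definition mid (k : nat) : bool := (1 < k < n.-1)%N.

Definition perp_mid (w : V) : Prop := forall k, mid k -> bform w (ev k) = 0.

Definition special_frame (base : nat -> V) (v0 v1 v2 : V) (i : nat) : V :=
  if i == 0%N then v0 else if i == 1%N then v1 else if i == n.-1 then v2 else base i.

Local Notation frame := (special_frame ev).
Local Notation coframe := (special_frame (fun k => ev ((2 * n).-1 - k))).

Lemma special_frame0 base v0 v1 v2 : special_frame base v0 v1 v2 0 = v0.
Proof. by []. Qed.

Lemma special_frame1 base v0 v1 v2 : special_frame base v0 v1 v2 1 = v1.
Proof. by []. Qed.

Lemma special_frame_last base v0 v1 v2 : special_frame base v0 v1 v2 n.-1 = v2.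
Proof. by rewrite /special_frame eqxx; do 2![case: eqP => [|_]; first lia]. Qed.

Lemma special_frame_mid base v0 v1 v2 i : mid i -> special_frame base v0 v1 v2 i = base i.
Proof. by rewrite /mid /special_frame => mi; do 3![case: eqP => [|_]; first lia]. Qed.

Lemma not_mid i : (i < n)%N -> ~~ mid i -> [\/ i = 0, i = 1 | i = n.-1]%N.
Proof.
rewrite /mid => i_lt; case: i i_lt => [|[|i]] i_lt mi;
  [constructor 1 | constructor 2 | constructor 3]; lia.
Qed.

Lemma mid_standard_flag (x y : nat -> V) a : (sumn a <= n)%N ->
  (forall i, mid i -> x i = ev i /\ y i = ev ((2 * n).-1 - i)) ->
  (forall i k, (i < n)%N -> ~~ mid i -> mid k ->
    [/\ bform (x i) (ev k) = 0, bform (y i) (ev k) = 0 & bform (x i) (ev ((2 * n).-1 - k)) = 0]) ->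
  (forall i j, (i < n)%N -> (j < n)%N -> ~~ mid i -> ~~ mid j ->
    bform (x i) (x j) = 0 /\ bform (x i) (y j) = (i == j)%:R) ->
  is_flag F n a (flag_of a x).
Proof.
move=> a_le std perp special; apply: (flag_of_is_flag (y := y)) => // i j i_lt j_lt.
  case: (boolP (mid i)) => mi; case: (boolP (mid j)) => mj.
  - case: (std i mi) (std j mj) => -> _ [-> _]; rewrite bform_ev.
    by move: mi mj; rewrite /mid; case: eqP => [|_]; [lia | rewrite andbF].
  - by case: (std i mi) => -> _; rewrite bform_sym; case: (perp j i j_lt mj mi).
  - by case: (std j mj) => -> _; case: (perp i j i_lt mi mj).
  - by case: (special i j i_lt j_lt mi mj).
case: (boolP (mid i)) => mi; case: (boolP (mid j)) => mj.
- case: (std i mi) (std j mj) => -> _ [_ ->]; rewrite bform_ev.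
  by congr (_ %:R); move: mi mj; rewrite /mid; lia.
- case: (std i mi) => -> _; rewrite bform_sym; case: (perp j i j_lt mj mi) => _ -> _.
  by case: eqP mi mj => [-> ->|].
- case: (std j mj) => _ ->; case: (perp i j i_lt mi mj) => _ _ ->.
  by case: eqP mj mi => [-> ->|].
- by case: (special i j i_lt j_lt mi mj).
Qed.

Lemma special_frame_mem0 v0 v1 v2 d : (0 < d)%N -> (v0 <= frame_mx (frame v0 v1 v2) d)%MS.
Proof. by move=> d_gt0; apply: (@frame_mx_mem _ _ 0); lia. Qed.

Lemma special_frame_mem1 v0 v1 v2 d : (1 < d)%N -> (v1 <= frame_mx (frame v0 v1 v2) d)%MS.
Proof. by move=> d_gt1; apply: (@frame_mx_mem _ _ 1); lia. Qed.

Lemma special_frame_mem_last v0 v1 v2 : (v2 <= frame_mx (frame v0 v1 v2) n)%MS.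
Proof. by rewrite -{1}(special_frame_last ev v0 v1 v2); apply: frame_mx_mem; lia. Qed.

Lemma special_frame_perp v0 v1 v2 d w : (d <= n)%N -> perp_mid w ->
  bform w v0 = 0 -> ((1 < d)%N -> bform w v1 = 0) -> ((n.-1 < d)%N -> bform w v2 = 0) ->
  forall v, (v <= frame_mx (frame v0 v1 v2) d)%MS -> bform w v = 0.
Proof.
move=> d_le w_mid w0 w1 w2 v; apply: frame_mx_perp => i id.
have [mi|] := boolP (mid i); first by rewrite special_frame_mid // w_mid.
case/(not_mid (leq_trans id d_le)) => i_eq; subst i.
- by [].
- by rewrite special_frame1 w1.
- by rewrite special_frame_last w2.
Qed.

Lemma special_frame_perp_mid v0 v1 v2 d y : (d < n)%N -> perp_mid v0 -> perp_mid v1 ->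
  (y <= frame_mx (frame v0 v1 v2) d)%MS -> perp_mid y.
Proof.
move=> d_lt v0_mid v1_mid yF k mk; rewrite bform_sym.
apply: (special_frame_perp (ltnW d_lt) _ _ _ _ yF) => [k' mk'| | |d_gt] //.
- by rewrite bform_ev; move: mk mk'; rewrite /mid; case: eqP => [|_]; [lia | rewrite andbF].
- by rewrite bform_sym v0_mid.
- by rewrite bform_sym v1_mid.
- by exfalso; lia.
Qed.

Lemma special_frame_decomp v0 v1 v2 d v : (1 < d < n)%N ->
  (v <= frame_mx (frame v0 v1 v2) d)%MS ->
  exists a b, forall w, perp_mid w -> bform w v = a * bform w v0 + b * bform w v1.
Proof.
move=> /andP [d_gt1 d_lt] /frame_mxP [r ->].
have i0 : (0 < 2 * n)%N by lia.
have i1 : (1 < 2 * n)%N by lia.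
exists (r (Ordinal i0)), (r (Ordinal i1)) => w w_mid.
rewrite bform_sumr (bigD1 (Ordinal i0)) /= ?(ltnW d_gt1) // (bigD1 (Ordinal i1)) /= ?d_gt1 //.
rewrite big1 ?addr0 // => i /andP [/andP [id ni0] ni1].
have mi : mid i by move: ni0 ni1; rewrite /mid -!val_eqE /=; lia.
by rewrite special_frame_mid // w_mid // mulr0.
Qed.

(* [lia] is very slow in the large contexts of the proofs below, so the
   arithmetic side conditions are decided after discarding everything else. *)
Ltac clear_but_nat_bounds :=
  repeat match goal with H : is_true (leq _ _) |- _ => revert H end;
  repeat match goal with H : _ |- _ => clear H end;
  intros.

Ltac bform_eval :=
  rewrite ?(bformDl, bformDr, bformBl, bformBr, bformZl, bformZr, bformNl, bformNr) ?bform_ev;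
  clear_but_nat_bounds;
  repeat match goal with |- context [nat_of_bool ?b] =>
    lazymatch b with
    | true => fail | false => fail
    | _ => first [have -> : b = true by lia | have -> : b = false by lia]
    end end;
  rewrite /=; ring.

Ltac special_frame_conditions :=
  first
  [ by move=> i mi; rewrite !special_frame_mid
  | by move=> i k i_lt /(not_mid i_lt) [] -> /andP [? ?];
    rewrite ?special_frame0 ?special_frame1 ?special_frame_last; split; bform_eval
  | by move=> i j i_lt j_lt /(not_mid i_lt) [] -> /(not_mid j_lt) [] ->;
    rewrite ?special_frame0 ?special_frame1 ?special_frame_last; split; bform_eval ].

Ltac perp_conditions :=
  first [ move=> ?; exfalso; clear_but_nat_bounds; lia
        | move=> k /andP [? ?]; bform_eval | move=> _; bform_eval | bform_eval ].

Local Notation E0 := (ev 0).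
Local Notation E1 := (ev 1).
Local Notation Ec := (ev n.-1).
Local Notation Fc := (ev n).
Local Notation F1 := (ev (2 * n).-2).
Local Notation F0 := (ev (2 * n).-1).

Definition XB := frame E0 Ec E1.
Definition YB := frame Fc F0 E1.
Definition zB : V := E0 + E1 + Fc.
Definition wB (t : F) : V := Ec - (1 + t) *: F1 + t *: F0.
Definition ZB (t : F) := frame zB (E0 - t *: Fc) (wB t).

Lemma XB_flag a : (sumn a <= n)%N -> is_flag F n a (flag_of a XB).
Proof.
move=> a_le; apply: (mid_standard_flag (y := coframe F0 Fc F1) a_le); rewrite /XB.
all: special_frame_conditions.
Qed.

Lemma YB_flag a : (sumn a <= n)%N -> is_flag F n a (flag_of a YB).
Proof.
move=> a_le; apply: (mid_standard_flag (y := coframe Ec E0 F1) a_le); rewrite /YB.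
all: special_frame_conditions.
Qed.

Lemma ZB_flag t a : (sumn a <= n)%N -> is_flag F n a (flag_of a (ZB t)).
Proof.
move=> a_le; apply: (mid_standard_flag (y := coframe F1 (F0 - F1) Fc) a_le).
all: rewrite /ZB /zB /wB; special_frame_conditions.
Qed.

Definition XA := frame E0 E1 Ec.
Definition YA := frame F0 F1 Ec.
Definition w1A (r : F) : V := E0 + r *: F1 + Ec.
Definition w2A (r : F) : V := E1 - F0 + (1 - r) *: Fc.
Definition ZA (r : F) := frame (w1A r) (w2A r) (E0 + F1).

Lemma XA_flag a : (sumn a <= n)%N -> is_flag F n a (flag_of a XA).
Proof.
move=> a_le; apply: (mid_standard_flag (y := coframe F0 F1 Fc) a_le); rewrite /XA.
all: special_frame_conditions.
Qed.

Lemma YA_flag a : (sumn a <= n)%N -> is_flag F n a (flag_of a YA).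
Proof.
move=> a_le; apply: (mid_standard_flag (y := coframe E0 E1 Fc) a_le); rewrite /YA.
all: special_frame_conditions.
Qed.

Lemma ZA_flag r a : (sumn a <= n)%N -> is_flag F n a (flag_of a (ZA r)).
Proof.
move=> a_le; apply: (mid_standard_flag (y := coframe Fc F1 (F0 - Fc)) a_le).
all: rewrite /ZA /w1A /w2A; special_frame_conditions.
Qed.

(* With z h = c z, the three pairings below give c = (x, f_0) = (y, e_{n-1}) and
   s c = t c for x = e_0 h and y = f_{n-1} h; hence c = 0, but (z h, f_1 h) = 1. *)
Lemma ZB_rigid h t s dSX dTX dSY dTY :
  h \in orthogonal_group F n -> t != s ->
  (0 < dSX < n)%N -> (1 < dTX <= n)%N -> (0 < dSY < n)%N -> (1 < dTY <= n)%N ->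
  (frame_mx XB dSX *m h == frame_mx XB dSX)%MS -> (frame_mx XB dTX *m h == frame_mx XB dTX)%MS ->
  (frame_mx YB dSY *m h == frame_mx YB dSY)%MS -> (frame_mx YB dTY *m h == frame_mx YB dTY)%MS ->
  (frame_mx (ZB t) 1 *m h == frame_mx (ZB s) 1)%MS ->
  (frame_mx (ZB t) n *m h == frame_mx (ZB s) n)%MS -> False.
Proof.
move=> hO ts /andP [SX0 SXn] /andP [TX1 TXn] /andP [SY0 SYn] /andP [TY1 TYn] XS XT YS YT Z1 Zn.
have [c zBh] : exists c, zB *m h = c *: zB.
  have zZ := special_frame_mem0 zB (E0 - t *: Fc) (wB t) (ltnSn 0).
  by have /frame_mx1P [c ->] := sub_image_eqmx Z1 zZ; exists c.
set x := E0 *m h; set y := Fc *m h.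
have c_yEc : c = bform y Ec.
  have /eqP : bform ((zB - Fc) *m h) Ec = 0.
    apply: (bform_image_perp hO XT) (special_frame_mem1 E0 Ec E1 TX1).
    by apply: (special_frame_perp TXn); rewrite /zB; perp_conditions.
  by rewrite mulmxBl zBh bformBl bformZl subr_eq0 => /eqP <-; rewrite /zB; bform_eval.
have c_xF0 : c = bform x F0.
  have /eqP : bform ((zB - E0) *m h) F0 = 0.
    apply: (bform_image_perp hO YT) (special_frame_mem1 Fc F0 E1 TY1).
    by apply: (special_frame_perp TYn); rewrite /zB; perp_conditions.
  by rewrite mulmxBl zBh bformBl bformZl subr_eq0 => /eqP <-; rewrite /zB; bform_eval.
have xwB_t : bform x (wB s) = t * bform y (wB s).
  have /eqP : bform ((E0 - t *: Fc) *m h) (wB s) = 0.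
    apply: (bform_image_perp hO Zn) (special_frame_mem_last zB (E0 - s *: Fc) (wB s)).
    by apply: (special_frame_perp (leqnn n)); rewrite /zB /wB; perp_conditions.
  by rewrite mulmxBl -scalemxAl bformBl bformZl subr_eq0 => /eqP.
have xwB_s : bform x (wB s) = s * bform x F0.
  have xX := sub_image_eqmx XS (special_frame_mem0 E0 Ec E1 SX0).
  apply/eqP; rewrite -subr_eq0 -bformZr -bformBr bform_sym; apply/eqP.
  by apply: (special_frame_perp (ltnW SXn) _ _ _ _ xX); rewrite /wB; perp_conditions.
have ywB : bform y (wB s) = bform y Ec.
  have yY := sub_image_eqmx YS (special_frame_mem0 Fc F0 E1 SY0).
  apply/eqP; rewrite -subr_eq0 -bformBr bform_sym; apply/eqP.
  by apply: (special_frame_perp (ltnW SYn) _ _ _ _ yY); rewrite /wB; perp_conditions.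
have c0 : c = 0.
  have /eqP : (s - t) * c = 0 by rewrite mulrBl {1}c_xF0 -xwB_s xwB_t ywB -c_yEc subrr.
  by rewrite mulf_eq0 subr_eq0 eq_sym (negbTE ts) => /eqP.
have : bform zB F1 = 1 by rewrite /zB; bform_eval.
by rewrite -(bform_orthogonal _ _ hO) zBh c0 scale0r bform0l => /eqP; rewrite eq_sym oner_eq0.
Qed.

(* dd lies in the span of XA's first p vectors and is orthogonal to f_0 and f_1,
   so it lies in the middle planes, which are orthogonal to the span of ZA s. *)
Lemma ZA_rigid_pairing h s p q r (u x : V) g g' :
  h \in orthogonal_group F n -> (1 < p < n)%N -> (1 < q)%N -> (r < n)%N ->
  (frame_mx XA p *m h == frame_mx XA p)%MS -> (frame_mx YA q *m h == frame_mx YA q)%MS ->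
  (x <= frame_mx XA p)%MS -> (forall v, (v <= frame_mx YA q)%MS -> bform (u - x) v = 0) ->
  (forall w, perp_mid w -> bform w (u *m h) = g * bform w (w1A s) + g' * bform w (w2A s)) ->
  forall y, (y <= frame_mx (ZA s) r)%MS -> bform (x *m h) y = bform (g *: E0 + g' *: E1) y.
Proof.
move=> hO p_mid q_gt1 r_lt XP YQ xX uxY uh y yZ.
have /andP [p_gt1 _] := p_mid.
set dd := g *: E0 + g' *: E1 - x *m h.
have ddX : (dd <= frame_mx XA p)%MS.
  apply: addmx_sub; last by rewrite eqmx_opp; apply: sub_image_eqmx XP xX.
  by apply: addmx_sub; apply: scalemx_sub;
    [apply: special_frame_mem0 (ltnW p_gt1) | apply: special_frame_mem1 p_gt1].
have [a [b dd_ab]] := special_frame_decomp p_mid ddX.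
have dd_f f : (f <= frame_mx YA q)%MS -> perp_mid f ->
    bform f dd = bform f (g *: E0 + g' *: E1) - (g * bform f (w1A s) + g' * bform f (w2A s)).
  move=> fY f_mid; rewrite bformBr -uh //; congr (_ - _).
  have /eqP := bform_image_perp hO YQ uxY fY.
  by rewrite mulmxBl bformBl subr_eq0 => /eqP ux; rewrite !(bform_sym f) ux.
have F0Y := special_frame_mem0 F0 F1 Ec (ltnW q_gt1).
have F1Y := special_frame_mem1 F0 F1 Ec q_gt1.
have F0_mid : perp_mid F0 by move=> k /andP [? ?]; bform_eval.
have F1_mid : perp_mid F1 by move=> k /andP [? ?]; bform_eval.
have a0 : a = 0.
  have : bform F0 dd = a by rewrite dd_ab //; bform_eval.
  by rewrite dd_f // /w1A /w2A => <-; bform_eval.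
have b0 : b = 0.
  have : bform F1 dd = b by rewrite dd_ab //; bform_eval.
  by rewrite dd_f // /w1A /w2A => <-; bform_eval.
have y_mid : perp_mid y.
  by apply: (special_frame_perp_mid r_lt _ _ yZ) => k /andP [? ?]; rewrite /w1A /w2A; bform_eval.
apply/eqP; rewrite eq_sym -subr_eq0 -bformBl bform_sym -/dd dd_ab // a0 b0.
by rewrite !mul0r addr0.
Qed.

(* Modulo the middle planes, w1A t h = a1 w1A s + a1' w2A s and
   w2A t h = a2 w1A s + a2' w2A s.  Pairing these with e_0 h and e_1 h gives
   a1 a1' (s - 1) = 0; then a1 = 0 forces t s = 1 and a1' = 0 forces t = s. *)
Lemma ZA_rigid h t s p q r :
  h \in orthogonal_group F n -> t != s -> t * s != 1 -> s != 1 ->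
  (1 < p < n)%N -> (1 < q < n)%N -> (1 < r < n)%N ->
  (frame_mx XA p *m h == frame_mx XA p)%MS -> (frame_mx YA q *m h == frame_mx YA q)%MS ->
  (frame_mx (ZA t) r *m h == frame_mx (ZA s) r)%MS -> False.
Proof.
move=> hO ts ts1 s1 p_mid /andP [q_gt1 q_lt] r_mid XP YQ ZR.
have /andP [p_gt1 _] := p_mid; have /andP [r_gt1 r_lt] := r_mid.
have w1Z := sub_image_eqmx ZR (special_frame_mem0 (w1A t) (w2A t) (E0 + F1) (ltnW r_gt1)).
have w2Z := sub_image_eqmx ZR (special_frame_mem1 (w1A t) (w2A t) (E0 + F1) r_gt1).
have [a1 [a1' w1h]] := special_frame_decomp r_mid w1Z.
have [a2 [a2' w2h]] := special_frame_decomp r_mid w2Z.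
have w1Y v : (v <= frame_mx YA q)%MS -> bform (w1A t - E0) v = 0.
  by apply: (special_frame_perp (ltnW q_lt)); rewrite /w1A; perp_conditions.
have w2Y v : (v <= frame_mx YA q)%MS -> bform (w2A t - E1) v = 0.
  by apply: (special_frame_perp (ltnW q_lt)); rewrite /w2A; perp_conditions.
have pair0 := ZA_rigid_pairing hO p_mid q_gt1 r_lt XP YQ
  (special_frame_mem0 E0 E1 Ec (ltnW p_gt1)) w1Y w1h.
have pair1 := ZA_rigid_pairing hO p_mid q_gt1 r_lt XP YQ
  (special_frame_mem1 E0 E1 Ec p_gt1) w2Y w2h.
have E0_mid : perp_mid E0 by move=> k /andP [? ?]; bform_eval.
have E1_mid : perp_mid E1 by move=> k /andP [? ?]; bform_eval.
have E0w1 : bform E0 (w1A t *m h) = - a1' by rewrite w1h // /w1A /w2A; bform_eval.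
have E1w1 : bform E1 (w1A t *m h) = a1 * s by rewrite w1h // /w1A /w2A; bform_eval.
have E0w2 : bform E0 (w2A t *m h) = - a2' by rewrite w2h // /w1A /w2A; bform_eval.
have E1w2 : bform E1 (w2A t *m h) = a2 * s by rewrite w2h // /w1A /w2A; bform_eval.
have e11 : a1 * - a1' + a1' * (a1 * s) = 0.
  have := pair0 _ w1Z; rewrite bformDl !bformZl E0w1 E1w1 bform_orthogonal // => <-.
  by rewrite /w1A; bform_eval.
have e12 : a1 * - a2' + a1' * (a2 * s) = -1.
  have := pair0 _ w2Z; rewrite bformDl !bformZl E0w2 E1w2 bform_orthogonal // => <-.
  by rewrite /w2A; bform_eval.
have e21 : a2 * - a1' + a2' * (a1 * s) = t.
  have := pair1 _ w1Z; rewrite bformDl !bformZl E0w1 E1w1 bform_orthogonal // => <-.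
  by rewrite /w1A; bform_eval.
have /eqP : a1 * a1' * (s - 1) = 0 by rewrite -e11; ring.
rewrite !mulf_eq0 subr_eq0 (negbTE s1) orbF => /orP [] /eqP a_0.
- have : t * s = - -1 by rewrite -e21 -e12 a_0; ring.
  by rewrite opprK; apply/eqP.
- have : t = s * - -1 by rewrite -e21 -e12 a_0; ring.
  by rewrite opprK mulr1; apply/eqP.
Qed.

End Special.
End Form.

Lemma finitely_many_orbits_collision (F : fieldType) n a b c (X Y : seq 'M[F]_(2 * n))
    (Z : F -> seq 'M[F]_(2 * n)) :
  finitely_many_orbits F n a b c ->
  is_flag F n a X -> is_flag F n b Y -> (forall t, is_flag F n c (Z t)) ->
  exists N, forall L : seq F, uniq L -> (N < size L)%N ->
    exists t s, [/\ t \in L, s \in L & t != s] /\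
      exists2 h, h \in orthogonal_group F n &
        [/\ flag_act_eq F n X X h, flag_act_eq F n Y Y h & flag_act_eq F n (Z t) (Z s) h].
Proof.
case=> reps reps_orbits XF YF ZF; exists (size reps) => L uL NL.
have [|t [s [r [tL sL ts [g gO [gX gY gZ]] [g' gO' [gX' gY' gZ']]]]]] :=
  @pigeonhole_rel _ _ (fun t r => exists2 g, g \in orthogonal_group F n &
    [/\ flag_act_eq F n r.1.1 X g, flag_act_eq F n r.1.2 Y g & flag_act_eq F n r.2 (Z t) g])
    L reps uL NL.
  by move=> t _; apply: reps_orbits.
exists t, s; split=> //; exists (invmx g *m g'); first exact: orthogonal_divl.
have gU := orthogonal_unitmx gO.
by split; [exact: flag_act_eq_comp gU gX gX' | exact: flag_act_eq_comp gU gY gY'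
  | exact: flag_act_eq_comp gU gZ gZ'].
Qed.

Lemma finitely_many_orbits_rev (F : fieldType) n a b c :
  finitely_many_orbits F n a b c -> finitely_many_orbits F n c b a.
Proof.
case=> reps orbits; exists [seq (r.2, r.1.2, r.1.1) | r <- reps] => X Y Z XF YF ZF.
have [r rR [g gO [gX gY gZ]]] := orbits Z Y X ZF YF XF.
by exists (r.2, r.1.2, r.1.1); [apply: map_f | exists g].
Qed.

Lemma finitely_many_orbits_swap23 (F : fieldType) n a b c :
  finitely_many_orbits F n a b c -> finitely_many_orbits F n a c b.
Proof.
case=> reps orbits; exists [seq (r.1.1, r.2, r.1.2) | r <- reps] => X Y Z XF YF ZF.
have [r rR [g gO [gX gY gZ]]] := orbits X Z Y XF ZF YF.
by exists (r.1.1, r.2, r.1.2); [apply: map_f | exists g].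
Qed.

Section NoFiniteOrbits.
Variables (F : fieldType) (n : nat).
Hypothesis F_infinite : forall s : seq F, exists x, x \notin s.
Hypothesis n_gt2 : (2 < n)%N.

Lemma no_finite_orbits_A a b c : (sumn a <= n)%N -> (sumn b <= n)%N -> (sumn c <= n)%N ->
  inner_partial_sum n a -> inner_partial_sum n b -> inner_partial_sum n c ->
  ~ finitely_many_orbits F n a b c.
Proof.
move=> a_le b_le c_le /hasP [p pa p_mid] /hasP [q qb q_mid] /hasP [r rc r_mid] orbits.
have [N collide] := finitely_many_orbits_collision orbits (XA_flag F n_gt2 a_le)
  (YA_flag F n_gt2 b_le) (fun t => ZA_flag n_gt2 t c_le).
have [L [uL sizeL L1 Linv]] := generic_params F_infinite N.+1.
have [|t [s [[tL sL ts] [h hO [hX hY hZ]]]]] := collide L uL; first by rewrite sizeL.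
have s1 : s != 1 by apply: contraNneq L1 => <-.
exact: (ZA_rigid n_gt2 hO ts (Linv t s tL sL ts) s1 p_mid q_mid r_mid)
  (flag_of_act hX pa) (flag_of_act hY qb) (flag_of_act hZ rc).
Qed.

Lemma no_finite_orbits_B a b c : (sumn a <= n)%N -> (sumn b <= n)%N -> (sumn c <= n)%N ->
  inner_partial_sum n a || extreme_partial_sums n a ->
  inner_partial_sum n b || extreme_partial_sums n b ->
  extreme_partial_sums n c -> ~ finitely_many_orbits F n a b c.
Proof.
move=> a_le b_le c_le /(partial_sums_spread n_gt2) /andP [/hasP [dSX SXa SX] /hasP [dTX TXa TX]].
move=> /(partial_sums_spread n_gt2) /andP [/hasP [dSY SYb SY] /hasP [dTY TYb TY]].
move=> /andP [c1 c_n] orbits.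
have [N collide] := finitely_many_orbits_collision orbits (XB_flag F n_gt2 a_le)
  (YB_flag F n_gt2 b_le) (fun t => ZB_flag n_gt2 t c_le).
have [L [uL sizeL _ _]] := generic_params F_infinite N.+1.
have [|t [s [[_ _ ts] [h hO [hX hY hZ]]]]] := collide L uL; first by rewrite sizeL.
exact: (ZB_rigid n_gt2 hO ts SX TX SY TY) (flag_of_act hX SXa) (flag_of_act hX TXa)
  (flag_of_act hY SYb) (flag_of_act hY TYb) (flag_of_act hZ c1) (flag_of_act hZ c_n).
Qed.

End NoFiniteOrbits.

Unset Implicit Arguments.

Theorem proposition1p3 (F : fieldType)
  (F_infinite : forall s : seq F, exists x : F, x \notin s)
  (F_char : (2%:R : F) != 0)
  (n : nat) (hn : (3 <= n)%N) (a b c : seq nat)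
  (ha : admissible_seq n a) (hb : admissible_seq n b) (hc : admissible_seq n c) :
  finitely_many_orbits F n a b c ->
  [\/ a = [:: 1%N] \/ a = [:: n], b = [:: 1%N] \/ b = [:: n]
    | c = [:: 1%N] \/ c = [:: n]].
Proof.
move=> orbits.
have a_le : (sumn a <= n)%N by case/and3P: ha.
have b_le : (sumn b <= n)%N by case/and3P: hb.
have c_le : (sumn c <= n)%N by case/and3P: hc.
case: (admissible_seq_cases ha) => [->|->|Ka]; [by constructor 1; left | by constructor 1; right |].
case: (admissible_seq_cases hb) => [->|->|Kb]; [by constructor 2; left | by constructor 2; right |].
case: (admissible_seq_cases hc) => [->|->|Kc]; [by constructor 3; left | by constructor 3; right |].
exfalso; case/orP: (Kc) => [Ic | Ec].
  case/orP: (Ka) => [Ia | Ea].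
    case/orP: (Kb) => [Ib | Eb].
      exact: (no_finite_orbits_A F_infinite hn a_le b_le c_le Ia Ib Ic).
    exact: (no_finite_orbits_B F_infinite hn a_le c_le b_le Ka Kc Eb)
      (finitely_many_orbits_swap23 orbits).
  exact: (no_finite_orbits_B F_infinite hn c_le b_le a_le Kc Kb Ea)
    (finitely_many_orbits_rev orbits).
exact: (no_finite_orbits_B F_infinite hn a_le b_le c_le Ka Kb Ec).
Qed.
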